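(* Let $n\ge k\ge 2$ be integers. If $\mathcal{F}\subseteq\mathbb{Z}_{2^n}$ does not contain a projective $2^{k-1}$-cube, then $|\mathcal{F}|\le |L_1\cup L_2\cup\dots\cup L_{k-1}|$.
   Context: All arithmetic is in $\mathbb{Z}_{2^n}$. For a multiset $S=\{a_1,\dots,a_d\}$ of $d$ (not necessarily distinct) elements of $\mathbb{Z}_{2^n}$, the projective $d$-cube generated by $S$ is the set $\Sigma^*S=\{\sum_{i\in I}a_i \bmod 2^n:\emptyset\ne I\subseteq[d]\}$ (viewed as a set). A set $A\subseteq\mathbb{Z}_{2^n}$ contains a projective $d$-cube if there is a multiset $S$ of size $d$ with $\Sigma^*S\subseteq A$. Layers: for $1\le i\le n$, $L_i=\{x\in\mathbb{Z}_{2^n}: x\equiv 2^{i-1}\pmod{2^i}\}$, and $L_{n+1}=\{0\}$; thus $|L_i|=2^{n-i}$ for $i\le n$. *)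

From mathcomp Require Import all_boot.
Set Implicit Arguments. Unset Strict Implicit. Unset Printing Implicit Defensive.

(* Z_{2^n} is modelled as 'I_(2^n) (residues 0..2^n-1), with addition mod 2^n. *)

(* The projective d-cube generated by the multiset {a_0,...,a_{d-1}}
   (given as a d-tuple, repetitions allowed): all sums over nonempty
   index subsets, reduced mod 2^n. *)
Definition proj_cube (n d : nat) (a : d.-tuple 'I_(2 ^ n)) : {set 'I_(2 ^ n)} :=
  [set x : 'I_(2 ^ n) | [exists I : {set 'I_d},
      (I != set0) && (val x == (\sum_(i in I) val (tnth a i)) %% 2 ^ n)]].

Definition contains_proj_cube (n d : nat) (A : {set 'I_(2 ^ n)}) : Prop :=
  exists a : d.-tuple 'I_(2 ^ n), proj_cube a \subset A.

Definition layer (n i : nat) : {set 'I_(2 ^ n)} :=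
  if (1 <= i <= n) then [set x : 'I_(2 ^ n) | val x %% 2 ^ i == 2 ^ i.-1]
  else if i == n.+1 then [set x : 'I_(2 ^ n) | val x == 0]
  else set0.

Definition layers_upto (n m : nat) : {set 'I_(2 ^ n)} :=
  \bigcup_(1 <= i < m.+1) layer n i.

From mathcomp Require Import all_boot zify.
Set Implicit Arguments. Unset Strict Implicit. Unset Printing Implicit Defensive.

(* Let G be the complement of F and m = k - 1.  As |L_1 u ... u L_m| = 2^n - 2^(n-m),
   a larger F leaves 2^m |G| < 2^n.  The projective 2^m-cube generated by x and
   2^m - 1 copies of h consists of the points j h (0 < j < 2^m) and x + j h (j < 2^m).
   Multiplication by j = 2^t u (u odd) maps the odd residues 2^t-to-one onto the
   residues of 2-adic valuation t, and 2^(m-1-t) of the 0 < j < 2^m have valuation t;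
   hence the pairs (h, j) with h odd and j h in G number at most 2^(m-1) |G| < 2^(n-1),
   and some odd h has no multiple j h in G.  For that h the translates
   x + {j h : j < 2^m} meet G at most 2^m |G| < 2^n times in total, so one of them
   misses G as well. *)

Lemma reindex_nat_inj N (f : nat -> nat) (P : nat -> nat) :
  (forall x, x < N -> f x < N) ->
  {in [pred x | x < N] &, injective f} ->
  \sum_(0 <= x < N) P (f x) = \sum_(0 <= x < N) P x.
Proof.
move=> f_lt f_inj; rewrite !big_mkord.
pose g (x : 'I_N) : 'I_N := Ordinal (f_lt x (ltn_ord x)).
have g_inj : injective g.
  by move=> x y /(congr1 val) /f_inj xy; apply/val_inj/xy; rewrite inE.
by rewrite [RHS](reindex_inj g_inj).
Qed.

Lemma big_nat_double M (F : nat -> nat) :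
  \sum_(0 <= y < M.*2) F y = \sum_(0 <= y < M) F y.*2 + \sum_(0 <= y < M) F y.*2.+1.
Proof.
elim: M => [|M IH]; first by rewrite !big_geq.
by rewrite doubleS !big_nat_recr //= IH; lia.
Qed.

Lemma big_nat1_double M (F : nat -> nat) : 0 < M ->
  \sum_(1 <= j < M.*2) F j = \sum_(1 <= i < M) F i.*2 + \sum_(0 <= i < M) F i.*2.+1.
Proof.
move=> M_gt0; have := big_nat_double M F.
rewrite (@big_ltn _ _ _ 0) ?double_gt0 // (@big_ltn _ _ _ 0 M) //=.
by rewrite -addnA => /addnI.
Qed.

Lemma big_nat_halves M (F : nat -> nat) :
  \sum_(0 <= y < M.*2) F y = \sum_(0 <= y < M) F y + \sum_(0 <= y < M) F (y + M).
Proof.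
rewrite -addnn (big_cat_nat _ (leq_addr M M)) //=.
by rewrite -{2}[M]add0n big_addn addnK.
Qed.

Lemma big_nat_odd M (F : nat -> nat) :
  \sum_(0 <= h < M.*2) odd h * F h = \sum_(0 <= y < M) F y.*2.+1.
Proof.
rewrite big_nat_double big1 ?add0n => [|y _]; last by rewrite odd_double.
by apply: eq_bigr => y _; rewrite /= odd_double mul1n.
Qed.

Lemma big_nat_lt_exists_eq0 M (F : nat -> nat) :
  \sum_(0 <= y < M) F y < M -> exists2 y, y < M & F y = 0.
Proof.
move=> small; have /existsP [y /eqP Fy0] : [exists y : 'I_M, F y == 0].
  apply: contraTT small => /existsPn F_pos; rewrite -leqNgt big_mkord.
  by rewrite -[M in M <= _]card_ord -sum1_card leq_sum // => y _; rewrite lt0n F_pos.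
by exists y.
Qed.

Lemma big_nat_eq0 a b (F : nat -> nat) :
  \sum_(a <= i < b) F i = 0 -> forall i, a <= i < b -> F i = 0.
Proof.
move/eqP; rewrite sum_nat_seq_eq0 => /allP F0 i ltab.
by apply/eqP/F0; rewrite mem_index_iota.
Qed.

Lemma mulmod_coprime_inj N j x y : coprime j N -> x < N -> y < N ->
  j * x = j * y %[mod N] -> x = y.
Proof.
move=> co_jN ltx lty; wlog le_yx : x y ltx lty / y <= x.
  move=> W; case: (leqP y x) => [|/ltnW] le E; first exact: W.
  by symmetry; apply: W.
move/eqP; rewrite eqn_mod_dvd ?leq_mul2l ?le_yx ?orbT // -mulnBr Gauss_dvdr 1?coprime_sym //.
rewrite /dvdn modn_small => [xy0|]; last exact: leq_ltn_trans (leq_subr y x) ltx.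
by apply/eqP; rewrite eqn_leq le_yx andbT -subn_eq0.
Qed.

Lemma big_nat_addn_mod N c (P : nat -> nat) : 0 < N ->
  \sum_(0 <= x < N) P ((x + c) %% N) = \sum_(0 <= x < N) P x.
Proof.
move=> N_gt0; apply: reindex_nat_inj => [x _|x y]; first by rewrite ltn_mod.
rewrite !inE => ltx lty /eqP; rewrite -/(_ == _ %[mod _]) eqn_modDr.
by rewrite !modn_small // => /eqP.
Qed.

Definition sum_odd_multiples n (P : nat -> nat) j :=
  \sum_(0 <= y < 2 ^ n) P ((j * y.*2.+1) %% 2 ^ n.+1).

Lemma sum_odd_multiples_odd n P j : odd j ->
  sum_odd_multiples n P j = \sum_(0 <= y < 2 ^ n) P y.*2.+1.
Proof.
move=> odd_j; have dbl : 2 ^ n.+1 = (2 ^ n).*2 by rewrite expnS mul2n.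
pose f h := (j * h) %% 2 ^ n.+1.
transitivity (\sum_(0 <= h < (2 ^ n).*2) odd h * P (f h)); first by rewrite big_nat_odd.
rewrite -big_nat_odd -dbl -(@reindex_nat_inj _ f (fun h => odd h * P h)).
- apply: eq_bigr => h _; rewrite /f odd_mod ?oddM ?odd_j //.
  by rewrite dbl odd_double.
- by move=> h _; rewrite /f ltn_mod expn_gt0.
- move=> x y; rewrite !inE => ltx lty; apply: mulmod_coprime_inj ltx lty.
  by rewrite coprimeXr // coprimen2.
Qed.

Lemma sum_odd_multiples_double n P i :
  sum_odd_multiples n.+1 P i.*2 = 2 * sum_odd_multiples n (P \o double) i.
Proof.
have dbl : 2 ^ n.+1 = (2 ^ n).*2 by rewrite expnS mul2n.
rewrite /sum_odd_multiples [in LHS]dbl big_nat_halves [RHS]mul2n -[in RHS]addnn.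
have mod_dbl u : (u.*2 %% 2 ^ n.+2) = (u %% 2 ^ n.+1).*2.
  by rewrite -!mul2n muln_modr -expnS.
congr (_ + _); apply: eq_bigr => y _ /=; rewrite -mod_dbl; congr P.
  by rewrite -!mul2n mulnA [2 * i]mulnC -mulnA.
rewrite (_ : i.*2 * _ = i * 2 ^ n.+2 + (i * y.*2.+1).*2) ?modnMDl //.
rewrite !expnS -!mul2n; nia.
Qed.

(* Odd j permute the odd residues; an even j = 2 i reduces to i at modulus 2^n
   with the weight P \o double. *)
Lemma sum_odd_multiples_le m n P : m <= n.+1 ->
  2 * \sum_(1 <= j < 2 ^ m) sum_odd_multiples n P j
    <= 2 ^ m * \sum_(0 <= y < 2 ^ n.+1) P y.
Proof.
elim: m n P => [|m IH] n P le_mn; first by rewrite big_geq.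
have dbl k : 2 ^ k.+1 = (2 ^ k).*2 by rewrite expnS mul2n.
rewrite (dbl m) (dbl n) big_nat_double big_nat1_double ?expn_gt0 //.
have odd_part : \sum_(0 <= i < 2 ^ m) sum_odd_multiples n P i.*2.+1
    = 2 ^ m * \sum_(0 <= y < 2 ^ n) P y.*2.+1.
  rewrite (eq_bigr (fun=> \sum_(0 <= y < 2 ^ n) P y.*2.+1)) => [|i _].
    by rewrite sum_nat_const_nat subn0.
  by rewrite sum_odd_multiples_odd //= odd_double.
have even_part : \sum_(1 <= i < 2 ^ m) sum_odd_multiples n P i.*2
    <= 2 ^ m * \sum_(0 <= y < 2 ^ n) P y.*2.
  case: n le_mn {odd_part} => [|n] le_mn; first by rewrite (_ : m = 0) 1?big_geq //; lia.
  rewrite (eq_bigr _ (fun i _ => sum_odd_multiples_double n P i)) -big_distrr.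
  exact: IH.
rewrite odd_part; set K := 2 ^ m in even_part *; nia.
Qed.

Lemma exists_odd_avoiding m n (P : nat -> nat) : 0 < n -> m <= n ->
  2 ^ m * \sum_(0 <= y < 2 ^ n) P y < 2 ^ n ->
  exists2 h, odd h && (h < 2 ^ n) & forall j, 0 < j < 2 ^ m -> P ((j * h) %% 2 ^ n) = 0.
Proof.
case: n => // n _ le_mn small.
have [y lty /big_nat_eq0 y_good] : exists2 y, y < 2 ^ n &
    \sum_(1 <= j < 2 ^ m) P ((j * y.*2.+1) %% 2 ^ n.+1) = 0.
  apply: big_nat_lt_exists_eq0; rewrite exchange_big_nat /=.
  have := sum_odd_multiples_le P le_mn; rewrite /sum_odd_multiples.
  move: small; rewrite (expnS 2 n); lia.
exists y.*2.+1; last exact: y_good.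
by rewrite /= odd_double expnS mul2n ltn_Sdouble.
Qed.

Lemma exists_shift_avoiding N d h (P : nat -> nat) :
  d * \sum_(0 <= y < N) P y < N ->
  exists2 x, x < N & forall j, j < d -> P ((x + j * h) %% N) = 0.
Proof.
move=> small; have N_gt0 : 0 < N by case: N small.
have [x ltx /big_nat_eq0 x_good] : exists2 x, x < N &
    \sum_(0 <= j < d) P ((x + j * h) %% N) = 0.
  apply: big_nat_lt_exists_eq0; rewrite exchange_big_nat /=.
  rewrite (eq_bigr (fun=> \sum_(0 <= y < N) P y)) => [|j _]; last exact: big_nat_addn_mod.
  by rewrite sum_nat_const_nat subn0.
by exists x => // j ltj; apply: x_good.
Qed.

Lemma mem_proj_cube_progression n d (x h z : 'I_(2 ^ n)) :
  z \in proj_cube [tuple if i == 0 :> nat then x else h | i < d] ->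
  exists2 j, j < d & val z = (x + j * h) %% 2 ^ n \/ 0 < j /\ val z = (j * h) %% 2 ^ n.
Proof.
rewrite inE => /existsP [I /andP [/set0Pn [i1 I_i1] /eqP ->]].
case: d I i1 I_i1 => [? [] //|d] I i1 I_i1.
set t := [tuple _ | i < d.+1]; set j := #|I :\ ord0|.
have le_jd : j <= d.
  rewrite -[d]/(d.+1.-1) -[d.+1 in X in _ <= X]card_ord -(cardsC1 ord0).
  by apply/subset_leq_card/subsetP => i; rewrite !inE => /andP [].
have sum_rest : \sum_(i in I :\ ord0) val (tnth t i) = j * h.
  rewrite -sum_nat_const; apply: eq_bigr => i; rewrite in_setD1 tnth_mktuple.
  by case/andP => i_neq0 _; rewrite ifN.
exists j => //; case: (boolP (ord0 \in I)) => [I_0|notI_0].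
  by left; rewrite (big_setD1 _ I_0) sum_rest tnth_mktuple.
right; split.
  rewrite card_gt0; apply/set0Pn; exists i1.
  by rewrite in_setD1 I_i1 andbT; apply: contraNneq notI_0 => <-.
rewrite -sum_rest; congr (_ %% _); apply: eq_bigl => i.
by rewrite in_setD1; case: eqP => // ->; apply/negbTE.
Qed.

Lemma exists_val_eq N (A : {set 'I_N}) (z : 'I_N) :
  [exists y in A, val y == val z] = (z \in A).
Proof.
by apply/exists_inP/idP => [[y A_y /eqP/val_inj <-] | A_z] //; exists z.
Qed.

Lemma sum_exists_val_eq N (A : {set 'I_N}) :
  \sum_(0 <= y < N) [exists z in A, val z == y] = #|A|.
Proof.
rewrite big_mkord -sum1_card [RHS]big_mkcond /=.
by apply: eq_bigr => z _; rewrite exists_val_eq; case: (z \in A).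
Qed.

Lemma notin_layers_upto_dvdn n m (z : 'I_(2 ^ n)) :
  m <= n -> z \notin layers_upto n m -> 2 ^ m %| val z.
Proof.
elim: m => [|m IH] lt_mn; first by rewrite dvd1n.
rewrite /layers_upto big_nat_recr //= in_setU negb_or /layer lt_mn inE /=.
case/andP => /(IH (ltnW lt_mn)) /dvdnP [q ->]; rewrite expnS -muln_modl modn2.
case: (boolP (odd q)) => /= [_|even_q _].
  by rewrite mul1n => /negP[].
by rewrite dvdn_pmul2r ?expn_gt0 // dvdn2.
Qed.

Lemma card_dvdn_ord_exp n m : m <= n ->
  #|[set z : 'I_(2 ^ n) | 2 ^ m %| val z]| <= 2 ^ (n - m).
Proof.
move=> le_mn; have lt_div (z : 'I_(2 ^ n)) : val z %/ 2 ^ m < 2 ^ (n - m).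
  by rewrite ltn_divLR ?expn_gt0 // -expnD (subnK le_mn) ltn_ord.
rewrite -[X in _ <= X]card_ord.
apply: (leq_card_in (fun z => Ordinal (lt_div z))) => y z; rewrite !inE.
move=> dvd_y dvd_z [] eq_div; apply/val_inj.
by rewrite /= -(divnK dvd_y) -(divnK dvd_z) eq_div.
Qed.

Lemma card_setC_layers_upto n m : m <= n -> #|~: layers_upto n m| <= 2 ^ (n - m).
Proof.
move=> le_mn; apply: leq_trans (card_dvdn_ord_exp le_mn).
apply/subset_leq_card/subsetP => z; rewrite !inE.
exact: notin_layers_upto_dvdn.
Qed.

Lemma card_setC_lt_of_layers_upto n m (F : {set 'I_(2 ^ n)}) :
  m <= n -> #|layers_upto n m| < #|F| -> 2 ^ m * #|~: F| < 2 ^ n.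
Proof.
move=> le_mn large; have := card_setC_layers_upto le_mn.
have := cardsC F; have := cardsC (layers_upto n m); rewrite card_ord => cardL cardF le_C.
apply: (@leq_trans (2 ^ m * 2 ^ (n - m))); last by rewrite -expnD subnKC.
by rewrite ltn_pmul2l ?expn_gt0 //; lia.
Qed.

Theorem theorem1p6 (n k : nat) (hk : 2 <= k) (hkn : k <= n)
  (F : {set 'I_(2 ^ n)}) :
  ~ contains_proj_cube (2 ^ k.-1) F ->
  #|F| <= #|layers_upto n k.-1|.
Proof.
move=> no_cube; rewrite leqNgt; apply/negP => large; apply: no_cube.
set m := k.-1 in large *.
have n_gt0 : 0 < n by lia.
have le_mn : m <= n by rewrite /m; lia.
have := card_setC_lt_of_layers_upto le_mn large; rewrite -sum_exists_val_eq => small.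
have [h /andP [_ lt_h] h_good] := exists_odd_avoiding n_gt0 le_mn small.
have [x lt_x x_good] := exists_shift_avoiding h small.
exists [tuple if i == 0 :> nat then Ordinal lt_x else Ordinal lt_h | i < 2 ^ m].
apply/subsetP => z /mem_proj_cube_progression [j lt_j z_eq].
rewrite -[z \in F]negbK -in_setC -exists_val_eq -eqb0; apply/eqP.
by case: z_eq => [-> | [j_gt0 ->]]; [apply: x_good | apply: h_good; rewrite j_gt0].
Qed.
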